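(* Let $(\hat{x}_i,\hat{a}_i,\hat{y}_i)$, $i=1,\dots,N$, be samples in $\mathbb{R}^n\times\{0,1\}\times\mathbb{R}$ with empirical distribution $\hat{\mathbb{P}}^N$ and empirical marginals $\hat{p}^N_a=\frac1N\#\{i:\hat{a}_i=a\}>0$. Let $\mathcal{R}(x)=\rho^Tx+\sigma$ with $\rho\in\mathbb{R}^n\setminus\{0\}$, $\sigma\in\mathbb{R}$, let $d(y,\hat{y})=\hat{y}$, and let $\lambda(a)=(\hat{p}^N_1)^{-1}\mathbb{1}_{a=1}-(\hat{p}^N_0)^{-1}\mathbb{1}_{a=0}$, so that $\phi(x,a,y)=\lambda(a)\mathcal{R}(x)$. Let $\alpha=1$, $\beta\ge0$, $c((x,a,y),(x',a',y'))=\|x-x'\|+\infty\cdot|a-a'|+\beta|y-y'|$ (with $\infty\cdot 0=0$), $W_c^2(\mathbb{P},\mathbb{Q})=\inf_{\pi\in\Pi(\mathbb{P},\mathbb{Q})}\mathbb{E}_\pi[c^2]$, and $$\mathcal{T}=\inf\Big\{W_c^2(\hat{\mathbb{P}}^N,\mathbb{Q}):\ \mathbb{E}_{\mathbb{Q}}[\phi(X,A,Y)]=0,\ \mathbb{Q}(A=a)=\hat{p}^N_a\ \forall a\Big\}.$$ Then $$\mathcal{T}=\frac{\big(\sum_{i=1}^N\lambda(\hat{a}_i)(\rho^T\hat{x}_i+\sigma)\big)^2}{N\|\rho\|^2\sum_{i=1}^N\lambda(\hat{a}_i)^2}.$$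
   Context: $\|\cdot\|$ is the Euclidean norm; $\Pi(\mathbb{P},\mathbb{Q})$ is the set of couplings; the infimum is over probability distributions $\mathbb{Q}$ on $\mathbb{R}^n\times\{0,1\}\times\mathbb{R}$. This is the squared Wasserstein projection onto the set of distributions under which the linear regressor satisfies the equal-mean fairness criterion $\mathbb{E}[\mathcal{R}(X)\mid A=0]=\mathbb{E}[\mathcal{R}(X)\mid A=1]$ (with empirical group weights). *)

From HB Require Import structures.
From mathcomp Require Import all_boot all_order all_algebra.
From mathcomp Require Import all_classical all_reals all_analysis.
Set Implicit Arguments. Unset Strict Implicit. Unset Printing Implicit Defensive.
Import Order.TTheory GRing.Theory Num.Theory.
Local Open Scope classical_set_scope.
Local Open Scope ring_scope.

Section Defs.
Context {R : realType} {n : nat}.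

(* points of R^n are n-tuples, with the product (Borel) sigma-algebra *)
Definition vec := (n.-tuple R).
(* sample space R^n x {0,1} x R ; the bool is the sensitive attribute, true = 1 *)
Definition Z := ((vec * bool) * R)%type.

Definition dotv (u v : vec) : R := \sum_(i < n) tnth u i * tnth v i.
Definition enorm (u : vec) : R := Num.sqrt (\sum_(i < n) tnth u i ^+ 2).
Definition edist (u v : vec) : R :=
  Num.sqrt (\sum_(i < n) (tnth u i - tnth v i) ^+ 2).

Definition cost (beta : R) (z z' : Z) : \bar R :=
  if z.1.2 == z'.1.2 then (edist z.1.1 z'.1.1 + beta * `|z.2 - z'.2|)%:E
  else +oo%E.

Definition empirical N (s : 'I_N -> Z) (A : set Z) : \bar R :=
  (N%:R^-1 * \sum_(i < N) (\1_A (s i) : R))%:E.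

Definition coupling N (s : 'I_N -> Z) (Q : probability Z R)
  (pi : probability (Z * Z)%type R) : Prop :=
  (forall A, measurable A -> pi (A `*` setT) = empirical s A) /\
  (forall B, measurable B -> pi (setT `*` B) = Q B).

Definition Wc2 (beta : R) N (s : 'I_N -> Z) (Q : probability Z R) : \bar R :=
  ereal_inf [set (\int[pi]_w (cost beta w.1 w.2 ^+ 2))%E
            | pi in [set pi | coupling s Q pi]].

Definition phat N (s : 'I_N -> Z) (a : bool) : R :=
  N%:R^-1 * #|[set i : 'I_N | (s i).1.2 == a]|%:R.

Definition lam N (s : 'I_N -> Z) (a : bool) : R :=
  if a then (phat s true)^-1 else - (phat s false)^-1.

Definition phi N (s : 'I_N -> Z) (rho : vec) (sigma : R) (z : Z) : R :=
  lam s z.1.2 * (dotv rho z.1.1 + sigma).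

Definition fairness_projection (beta : R) N (s : 'I_N -> Z) (rho : vec)
  (sigma : R) : \bar R :=
  ereal_inf [set Wc2 beta s Q | Q in
    [set Q : probability Z R |
      Q.-integrable setT (EFin \o phi s rho sigma) /\
      (\int[Q]_z (phi s rho sigma z)%:E = 0)%E /\
      (forall a : bool, Q [set z | z.1.2 = a] = (phat s a)%:E)]].

End Defs.

From Pilot Require Import Defs.
From HB Require Import structures.
From mathcomp Require Import all_boot all_order all_algebra.
From mathcomp Require Import all_classical all_reals all_analysis.
From mathcomp Require Import measurable_realfun ring lra.
Set Implicit Arguments. Unset Strict Implicit. Unset Printing Implicit Defensive.
Import Order.TTheory GRing.Theory Num.Theory.
Local Open Scope classical_set_scope.
Local Open Scope ring_scope.

(* For two samples with the same attribute a, phi z - phi z' = lam(a) rho^T (x - x'),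
   so completing the square gives, for every real t,
     c(z, z')^2 >= |x - x'|^2 >= 2 t (phi z - phi z') - t^2 |rho|^2 lam(a)^2,
   while c = +oo across attributes.  Integrating against a coupling of the empirical
   distribution with a feasible Q (where E_Q phi = 0) bounds W_c^2 from below by
   (2 t S - t^2 |rho|^2 L) / N, with S = sum_i phi(z_i) and L = sum_i lam(a_i)^2;
   t = S / (|rho|^2 L) gives the claimed value.  It is attained by moving each x_i to
   x_i - t lam(a_i) rho: this keeps the attributes, makes E_Q phi vanish, and the
   deterministic coupling of the samples with their moved copies has exactly that cost. *)

Section empirical_prob.
Context d (T : measurableType d) (R : realType) (M : nat) (w : 'I_M.+1 -> T).

Definition empirical_prob :=
  mscale (M.+1%:R^-1)%:nng
    (msum (fun k => \d_(w (inord k)) : {measure set T -> \bar R}) M.+1).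

HB.instance Definition _ := Measure.on empirical_prob.

Lemma empirical_probE A :
  empirical_prob A = (M.+1%:R^-1 * \sum_(i < M.+1) \1_A (w i))%:E.
Proof.
rewrite /empirical_prob /mscale /= /msum.
rewrite (eq_bigr (fun i : 'I_M.+1 => (\1_A (w i) : R)%:E)) => [|i _].
  by rewrite sumEFin -EFinM.
by rewrite /= diracE indicE inord_val.
Qed.

Lemma empirical_prob_setT : empirical_prob setT = 1%E.
Proof.
rewrite empirical_probE (eq_bigr (fun=> 1)) => [|i _]; last by rewrite indicE in_setT.
by rewrite sumr_const card_ord mulVf.
Qed.

HB.instance Definition _ :=
  Measure_isProbability.Build _ _ _ empirical_prob empirical_prob_setT.

Lemma ge0_integral_empirical_prob (f : T -> \bar R) :
  measurable_fun setT f -> (forall x, (0 <= f x)%E) ->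
  (\int[empirical_prob]_x f x = (M.+1%:R^-1)%:E * \sum_(i < M.+1) f (w i))%E.
Proof.
move=> mf f0; rewrite ge0_integral_mscale // ?ge0_integral_measure_sum //.
congr (_ * _)%E; apply: eq_bigr => i _.
by rewrite integral_dirac // diracT mul1e inord_val.
Qed.

Section real_function.
Variables (f : T -> R) (mf : measurable_fun setT f).

Lemma integrable_empirical_prob : empirical_prob.-integrable setT (EFin \o f).
Proof.
apply/integrableP; split; first exact/measurable_EFinP.
rewrite ge0_integral_empirical_prob //; last exact/measurable_EFinP/measurableT_comp.
by rewrite sumEFin -EFinM ltry.
Qed.

Lemma integral_empirical_prob :
  (\int[empirical_prob]_x (f x)%:E = (M.+1%:R^-1 * \sum_(i < M.+1) f (w i))%:E)%E.
Proof.
have mEf : measurable_fun setT (EFin \o f) by exact/measurable_EFinP.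
rewrite integralE.
rewrite ge0_integral_empirical_prob; [|exact: measurable_funepos|exact: funepos_ge0].
rewrite ge0_integral_empirical_prob; [|exact: measurable_funeneg|exact: funeneg_ge0].
under eq_bigr do rewrite funeposE -EFin_max.
under [X in (_ - _ * X)%E]eq_bigr do rewrite funenegE -EFin_max.
rewrite !sumEFin -!EFinM -EFinB -mulrBr -sumrB.
by congr (_ * _)%:E; apply: eq_bigr => i _; rewrite -[in RHS](funrposBneg f).
Qed.

End real_function.
End empirical_prob.
Arguments empirical_prob {d T R M} w.

Section image_measure.
Local Open Scope ereal_scope.
Context d1 d2 (X : measurableType d1) (Y : measurableType d2) (R : realType).
Variables (mu : {measure set X -> \bar R}) (P : {measure set Y -> \bar R}).
Variables (g : X -> Y) (mg : measurable_fun setT g).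
Hypothesis image_mu : forall A, measurable A -> mu (g @^-1` A) = P A.

Let integral_pushforwardE (h : Y -> \bar R) :
  \int[P]_y h y = \int[pushforward mu g]_y h y.
Proof. by apply: eq_measure_integral => A mA _; rewrite -image_mu. Qed.

Variables (f : Y -> R) (mf : measurable_fun setT f).
Hypothesis intf : P.-integrable setT (EFin \o f).

Lemma integrable_comp_image : mu.-integrable setT (EFin \o (f \o g)).
Proof.
apply/integrableP; split; first exact/measurable_EFinP/measurableT_comp.
move/integrableP : intf => [_].
rewrite integral_pushforwardE ge0_integral_pushforward ?preimage_setT //.
exact/measurable_EFinP/measurableT_comp.
Qed.

Lemma integral_comp_image : \int[mu]_x (f (g x))%:E = \int[P]_y (f y)%:E.
Proof.
rewrite integral_pushforwardE integral_pushforward ?preimage_setT //.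
- exact/measurable_EFinP.
- exact: integrable_comp_image.
Qed.

End image_measure.

Lemma le_integral_ge0 d (T : measurableType d) (R : realType)
  (mu : {measure set T -> \bar R}) (f : T -> R) (g : T -> \bar R) :
  mu.-integrable setT (EFin \o f) -> measurable_fun setT g ->
  (forall x, 0 <= g x)%E -> (forall x, (f x)%:E <= g x)%E ->
  (\int[mu]_x (f x)%:E <= \int[mu]_x g x)%E.
Proof.
move=> /integrableP[mf _] mg g0 fg; rewrite integralE -[leRHS]sube0.
apply: leeB; last by apply: integral_ge0 => x _; exact: funeneg_ge0.
apply: ge0_le_integral => //; first exact: measurable_funepos.
by move=> x _; rewrite funeposE ge_max fg g0.
Qed.

Lemma measurable_from_bool {d} {T : measurableType d} (f : bool -> T) :
  measurable_fun setT f.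
Proof. by move=> _ Y mY. Qed.

Section measurability.
Context {R : realType} {n : nat}.
Local Notation vec := (@vec R n).
Local Notation Z := (@Z R n).

Lemma measurable_feature : measurable_fun setT (fun z : Z => z.1.1).
Proof. exact: measurableT_comp measurable_fst measurable_fst. Qed.

Lemma measurable_attribute : measurable_fun setT (fun z : Z => z.1.2).
Proof. exact: measurableT_comp measurable_snd measurable_fst. Qed.

Lemma measurable_dotv (r : vec) : measurable_fun setT (dotv r).
Proof.
apply: measurable_sum => i; apply: measurable_funM => //; exact: measurable_tnth.
Qed.

Lemma measurable_edist {d} {T : measurableType d} (f g : T -> vec) :
  measurable_fun setT f -> measurable_fun setT g ->
  measurable_fun setT (fun x => Defs.edist (f x) (g x)).
Proof.
move=> mf mg.
apply: measurableT_comp (continuous_measurable_fun (@sqrt_continuous R)) _.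
apply: measurable_sum => i; apply/measurable_funX/measurable_funB.
- exact: measurableT_comp (measurable_tnth i) mf.
- exact: measurableT_comp (measurable_tnth i) mg.
Qed.

Lemma measurable_phi N (s : 'I_N -> Z) (rho : vec) (sigma : R) :
  measurable_fun setT (phi s rho sigma).
Proof.
rewrite /phi; apply: measurable_funM.
  exact: measurableT_comp (measurable_from_bool (lam s)) measurable_attribute.
apply: measurable_funD => //.
exact: measurableT_comp (measurable_dotv _) measurable_feature.
Qed.

Lemma measurable_same_attribute :
  measurable_fun setT (fun w : Z * Z => w.1.1.2 == w.2.1.2).
Proof.
have ma1 := measurableT_comp measurable_attribute (@measurable_fst _ _ Z Z).
have ma2 := measurableT_comp measurable_attribute (@measurable_snd _ _ Z Z).
rewrite (_ : (fun w : Z * Z => _) = fun w => if w.1.1.2 then w.2.1.2 else ~~ w.2.1.2).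
  exact: measurable_fun_ifT ma1 ma2 (measurable_neg ma2).
by apply/funext => -[[[? []] ?] [[? []] ?]].
Qed.

Lemma measurable_cost2 (beta : R) :
  measurable_fun setT (fun w : Z * Z => cost beta w.1 w.2 ^+ 2)%E.
Proof.
have mcost : measurable_fun setT (fun w : Z * Z => cost beta w.1 w.2).
  apply: measurable_fun_ifT; [exact: measurable_same_attribute| |exact: measurable_cst].
  apply/measurable_EFinP; apply: measurable_funD.
    apply: measurable_edist.
    + exact: measurableT_comp measurable_feature measurable_fst.
    + exact: measurableT_comp measurable_feature measurable_snd.
  apply: measurable_funM => //.
  have mlabels : measurable_fun setT (fun w : Z * Z => w.1.2 - w.2.2).
    apply: measurable_funB.
    - exact: measurableT_comp measurable_snd measurable_fst.
    - exact: measurableT_comp measurable_snd measurable_snd.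
  exact: measurableT_comp (@normr_measurable R setT) mlabels.
under eq_fun do rewrite expe2.
exact: emeasurable_funM.
Qed.

End measurability.

Section euclidean.
Context {R : realType} {n : nat}.
Local Notation vec := (@vec R n).

Definition vsubZ (x : vec) (c : R) (r : vec) : vec :=
  [tuple tnth x j - c * tnth r j | j < n].

Lemma enorm2 (x : vec) : enorm x ^+ 2 = \sum_j tnth x j ^+ 2.
Proof. by rewrite sqr_sqrtr // sumr_ge0 // => j _; exact: sqr_ge0. Qed.

Lemma edist2 (x y : vec) : Defs.edist x y ^+ 2 = \sum_j (tnth x j - tnth y j) ^+ 2.
Proof. by rewrite sqr_sqrtr // sumr_ge0 // => j _; exact: sqr_ge0. Qed.

Lemma enorm2_gt0 (x : vec) : x != [tuple 0 | _ < n] -> 0 < enorm x ^+ 2.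
Proof.
move=> x0; rewrite enorm2 lt_neqAle sumr_ge0 ?andbT => [|j _]; last exact: sqr_ge0.
apply: contra x0 => /eqP/esym/psumr_eq0P x_eq0; apply/eqP/eq_from_tnth => j.
by apply/eqP; rewrite tnth_mktuple -sqrf_eq0 x_eq0 // => i _; exact: sqr_ge0.
Qed.

Lemma dotvB_le_edist2 (c : R) (r x y : vec) :
  2 * c * (dotv r x - dotv r y) - c ^+ 2 * enorm r ^+ 2 <= Defs.edist x y ^+ 2.
Proof.
rewrite edist2 enorm2 /dotv -subr_ge0 -sumrB !mulr_sumr -!sumrB.
apply: sumr_ge0 => j _.
rewrite (_ : _ - _ = (tnth x j - tnth y j - c * tnth r j) ^+ 2) ?sqr_ge0 //.
ring.
Qed.

Lemma dotv_vsubZ (r x : vec) (c : R) :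
  dotv r (vsubZ x c r) = dotv r x - c * enorm r ^+ 2.
Proof.
rewrite enorm2 /dotv mulr_sumr -sumrB; apply: eq_bigr => j _.
by rewrite tnth_mktuple; ring.
Qed.

Lemma edist2_vsubZ (x : vec) (c : R) (r : vec) :
  Defs.edist x (vsubZ x c r) ^+ 2 = c ^+ 2 * enorm r ^+ 2.
Proof.
rewrite edist2 enorm2 mulr_sumr; apply: eq_bigr => j _.
by rewrite tnth_mktuple; ring.
Qed.

End euclidean.

Section projection_value.
Context (R : realType) (n M : nat) (s : 'I_M.+1 -> @Z R n) (rho : @vec R n)
  (sigma beta : R).
Local Notation Z := (@Z R n).
Local Notation N := M.+1.
Local Notation phi := (phi s rho sigma).
Local Notation lam := (lam s).

Let S := \sum_(i < N) phi (s i).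
Let K := enorm rho ^+ 2.
Let L := \sum_(i < N) lam (s i).1.2 ^+ 2.

Lemma empiricalE A : empirical s A = empirical_prob s A.
Proof. by rewrite empirical_probE. Qed.

Hypothesis beta_ge0 : 0 <= beta.

Lemma cost2_ge_phiB (t : R) (z1 z2 : Z) :
  ((2 * t * (phi z1 - phi z2) - t ^+ 2 * K * lam z1.1.2 ^+ 2)%:E
    <= cost beta z1 z2 ^+ 2)%E.
Proof.
rewrite /cost; case: eqP => [a12|_]; last by rewrite expe2 mulyy leey.
rewrite -EFin_expe lee_fin.
have edist_ge0 : 0 <= Defs.edist z1.1.1 z2.1.1 by exact: sqrtr_ge0.
have label_ge0 : 0 <= beta * `|z1.2 - z2.2| by rewrite mulr_ge0.
have -> : phi z1 - phi z2 = lam z1.1.2 * (dotv rho z1.1.1 - dotv rho z2.1.1).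
  by rewrite /Defs.phi -a12; ring.
have := dotvB_le_edist2 (t * lam z1.1.2) rho z1.1.1 z2.1.1; rewrite -/K; nra.
Qed.

Lemma coupling_integral_cost2_ge (t : R) (Q : probability Z R)
  (pi : probability (Z * Z)%type R) :
  coupling s Q pi -> Q.-integrable setT (EFin \o phi) ->
  (\int[Q]_z (phi z)%:E = 0)%E ->
  (((2 * t * S - t ^+ 2 * K * L) / N%:R)%:E
    <= \int[pi]_w (cost beta w.1 w.2 ^+ 2))%E.
Proof.
move=> [pi_fst pi_snd] intQ EQ.
have image_fst A : measurable A -> pi (fst @^-1` A) = empirical_prob s A.
  by move=> mA; rewrite -setXT pi_fst // empiricalE.
have image_snd B : measurable B -> pi (snd @^-1` B) = Q B.
  by move=> mB; rewrite -setTX pi_snd.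
pose F z := 2 * t * phi z - t ^+ 2 * K * lam z.1.2 ^+ 2.
pose G z := 2 * t * phi z.
have mphi := measurable_phi s rho sigma.
have mF : measurable_fun setT F.
  apply: measurable_funB; first exact: measurable_funM.
  apply: measurable_funM => //; apply: measurable_funX.
  exact: measurableT_comp (measurable_from_bool lam) measurable_attribute.
have mG : measurable_fun setT G by exact: measurable_funM.
have intF := integrable_empirical_prob s mF.
have intG : Q.-integrable setT (EFin \o G).
  have intZQ := integrableZl measurableT (2 * t) intQ.
  by apply: eq_integrable measurableT _ _ _ intZQ => z _; rewrite /= EFinM.
have intFpi := integrable_comp_image measurable_fst image_fst mF intF.
have intGpi := integrable_comp_image measurable_snd image_snd mG intG.
have -> : ((2 * t * S - t ^+ 2 * K * L) / N%:R)%:E =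
          (\int[pi]_w (F w.1 - G w.2)%:E)%E.
  under eq_integral do rewrite EFinB.
  rewrite integralB_EFin // (integral_comp_image measurable_fst image_fst mF intF).
  rewrite (integral_comp_image measurable_snd image_snd mG intG).
  rewrite integral_empirical_prob // /G.
  under eq_integral do rewrite EFinM.
  rewrite integralZl // EQ mule0 sube0; congr EFin.
  by rewrite /F sumrB -!mulr_sumr mulrC.
apply: le_integral_ge0.
- have intFGpi := integrableB measurableT intFpi intGpi.
  by apply: eq_integrable measurableT _ _ _ intFGpi => w _; rewrite /= EFinB.
- exact: measurable_cost2.
- by move=> w; exact: sqre_ge0.
- move=> [z1 z2]; apply: le_trans (cost2_ge_phiB t z1 z2).
  by rewrite lee_fin /F /G /=; lra.
Qed.

Let c := S / (K * L).
Let shift (z : Z) : Z := ((vsubZ z.1.1 (c * lam z.1.2) rho, z.1.2), z.2).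
Let Q0 : probability Z R := empirical_prob (shift \o s).
Let pi0 : probability (Z * Z)%type R :=
  empirical_prob (fun i => (s i, shift (s i))).

Lemma phi_shift z : phi (shift z) = phi z - c * K * lam z.1.2 ^+ 2.
Proof. by rewrite /Defs.phi /= dotv_vsubZ -/K; ring. Qed.

Lemma cost2_shift z :
  (cost beta z (shift z) ^+ 2)%E = ((c * lam z.1.2) ^+ 2 * K)%:E.
Proof.
by rewrite /cost /= eqxx subrr normr0 mulr0 addr0 -EFinM -expr2 edist2_vsubZ.
Qed.

Lemma coupling_shift : coupling s Q0 pi0.
Proof.
by split=> [A mA|B mB]; rewrite /pi0 /Q0 /= ?setXT ?setTX !empirical_probE.
Qed.

Lemma shift_attribute a : Q0 [set z | z.1.2 = a] = (phat s a)%:E.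
Proof.
rewrite /Q0 /= empirical_probE /phat; congr (_ * _)%:E.
rewrite -sum1_card natr_sum [RHS]big_mkcond /=; apply: eq_bigr => i _.
rewrite indicE unfold_in /in_set /= asboolb.
by case: eqP => [<-|neq]; [rewrite mem_set|rewrite memNset].
Qed.

Hypothesis rho_neq0 : rho != [tuple 0 | _ < n].
Hypotheses (phat0_gt0 : 0 < phat s false) (phat1_gt0 : 0 < phat s true).

Let K_neq0 : K != 0.
Proof. by rewrite gt_eqF // enorm2_gt0. Qed.

Let L_neq0 : L != 0.
Proof.
have lam_neq0 b : lam b != 0 by case: b; rewrite /Defs.lam ?oppr_eq0 invr_eq0 gt_eqF.
rewrite /L psumr_eq0 => [|i _]; last exact: sqr_ge0.
apply/allPn; exists ord0; first exact: mem_index_enum.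
by rewrite sqrf_eq0 lam_neq0.
Qed.

Lemma integral_phi_shift : (\int[Q0]_z (phi z)%:E = 0)%E.
Proof.
rewrite integral_empirical_prob; last exact: measurable_phi.
under eq_bigr do rewrite /= phi_shift.
rewrite sumrB -mulr_sumr -/S -/L /c -mulrA divfK; last exact: mulf_neq0.
by rewrite subrr mulr0.
Qed.

Lemma integral_cost2_shift :
  (\int[pi0]_w (cost beta w.1 w.2 ^+ 2) = (S ^+ 2 / (N%:R * K * L))%:E)%E.
Proof.
rewrite ge0_integral_empirical_prob; first last.
- by move=> w; exact: sqre_ge0.
- exact: measurable_cost2.
under eq_bigr do rewrite cost2_shift /=.
rewrite sumEFin -EFinM; congr EFin.
under eq_bigr do rewrite exprMn -mulrA mulrC.
by rewrite -!mulr_suml -/L /c; field; rewrite L_neq0 K_neq0 addrC natr1 pnatr_eq0.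
Qed.

Lemma fairness_projectionE :
  fairness_projection beta s rho sigma = (S ^+ 2 / (N%:R * K * L))%:E.
Proof.
apply/eqP; rewrite eq_le; apply/andP; split.
- apply: ge_ereal_inf; exists (Wc2 beta s Q0).
    exists Q0 => //; split; last split.
    + exact: integrable_empirical_prob (measurable_phi _ _ _).
    + exact: integral_phi_shift.
    + exact: shift_attribute.
  rewrite -integral_cost2_shift; apply: ge_ereal_inf.
  exists (\int[pi0]_w (cost beta w.1 w.2 ^+ 2))%E => //.
  by exists pi0 => //; exact: coupling_shift.
- apply/ereal_infP => _ [Q [intQ [EQ _]] <-]; apply/ereal_infP => _ [pi cpl <-].
  have -> : S ^+ 2 / (N%:R * K * L) =
            (2 * (S / (K * L)) * S - (S / (K * L)) ^+ 2 * K * L) / N%:R.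
    by field; rewrite L_neq0 K_neq0 addrC natr1 pnatr_eq0.
  by apply: (coupling_integral_cost2_ge (S / (K * L)) cpl).
Qed.

End projection_value.

Theorem corollary1 (R : realType) (n N : nat) (s : 'I_N -> @Z R n)
  (rho : @vec R n) (sigma beta : R) :
  0 < phat s false -> 0 < phat s true ->
  rho != [tuple 0 | _ < n] ->
  0 <= beta ->
  fairness_projection beta s rho sigma =
  ((\sum_(i < N) lam s (s i).1.2 * (dotv rho (s i).1.1 + sigma)) ^+ 2
   / (N%:R * enorm rho ^+ 2 * \sum_(i < N) lam s (s i).1.2 ^+ 2))%:E.
Proof.
case: N s => [|M] s phat0_gt0 phat1_gt0 rho_neq0 beta_ge0.
  by move: phat0_gt0; rewrite /phat invr0 mul0r ltxx.
exact: fairness_projectionE.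
Qed.
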